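(* Let $k\ge 3$ and let $p,p'$ be two POPs of size $k$ having the same set $I$ of isolated vertices, with $k-2,k-1,k\notin I$. Suppose that in both $p$ and $p'$, each of the labels $k-1$ and $k$ is greater than every label $x\in[k-2]\setminus I$. Suppose that the subposets of $p$ and $p'$ induced by $[k-2]\setminus I$ coincide, and that $k<_p k-1$ while $k-1<_{p'}k$. Then $p\sim p'$.
   Context: A partially ordered pattern (POP) $p$ of size $k$ is a partial order $\le_p$ on $[k]=\{1,\dots,k\}$. A permutation $\pi=\pi_1\cdots\pi_n$ contains $p$ if there are indices $i_1<\dots<i_k$ with $\pi_{i_j}<\pi_{i_m}$ whenever $j<_p m$; otherwise it avoids $p$. $\mathfrak S_n(p)$ is the set of permutations of $[n]$ avoiding $p$, and $p\sim q$ (Wilf-equivalence) means $|\mathfrak S_n(p)|=|\mathfrak S_n(q)|$ for all $n\ge 1$. A vertex is isolated if it is comparable to no other vertex. *)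

From mathcomp Require Import all_boot all_order all_fingroup.
Set Implicit Arguments. Unset Strict Implicit. Unset Printing Implicit Defensive.

(* A POP of size k is encoded by its STRICT order relation on 'I_k:
   [p x y] means x <_p y.  Label a in [k] = {1..k} corresponds to the
   ordinal of value a-1. *)
Definition is_pop (k : nat) (p : rel 'I_k) : Prop :=
  irreflexive p /\ transitive p.

Definition isolated (k : nat) (p : rel 'I_k) (x : 'I_k) : Prop :=
  forall y : 'I_k, y != x -> ~~ p x y /\ ~~ p y x.

Definition contains (k n : nat) (p : rel 'I_k) (pi : 'S_n) : bool :=
  [exists f : {ffun 'I_k -> 'I_n},
    [forall j : 'I_k, forall m : 'I_k,
       ((j < m)%N ==> (f j < f m)%N) && (p j m ==> (pi (f j) < pi (f m))%N)]].

Definition avoids (k n : nat) (p : rel 'I_k) (pi : 'S_n) : bool :=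
  ~~ contains p pi.

Definition num_avoiders (k n : nat) (p : rel 'I_k) : nat :=
  #|[set pi : 'S_n | avoids p pi]|.

Definition wilf_equiv (k : nat) (p q : rel 'I_k) : Prop :=
  forall n : nat, (1 <= n)%N -> num_avoiders n p = num_avoiders n q.

From mathcomp Require Import all_boot all_order all_fingroup.
From mathcomp Require Import zify.
From Stdlib Require Import Classical.
Set Implicit Arguments. Unset Strict Implicit. Unset Printing Implicit Defensive.

(* Both p and p' consist of a common lower part q, the restriction to the
   labels in [k-2], with the labels k-1 and k placed above all of it, forming
   a 21 in p and a 12 in p'.  Call a cell (i, v) of a permutation dominated if
   an occurrence of q lies strictly to its lower left.  A permutation contains
   p (resp. p') iff it has positions a < b whose entries form a 21 (resp. a 12)
   with the cell (a, min(s a, s b)) dominated.  Permuting the values of the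
   dominated entries does not change the dominated region, and each class of
   such rearrangements contains exactly one permutation with no dominated 21
   and exactly one with no dominated 12; hence |S_n(p)| = |S_n(p')|. *)

Section DominatedCells.

Variables (n : nat) (F : Type).

(* [occ s f e t]: [f] is an occurrence in [s] whose positions lie below [e]
   and whose relevant values lie below [t]; only the entries of [s] at the
   positions in [supp f] matter. *)
Variable occ : 'S_n -> F -> nat -> nat -> Prop.
Variable supp : F -> 'I_n -> Prop.

Hypothesis supp_in_box : forall s f e t, occ s f e t ->
  forall i, supp f i -> i < e /\ s i < t.
Hypothesis occ_local : forall (s s' : 'S_n) f e t, occ s f e t ->
  (forall i, supp f i -> s i = s' i) -> occ s' f e t.

Definition dominated (s : 'S_n) (i v : nat) : Prop :=
  exists f e t, [/\ occ s f e t, e <= i & t <= v].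

Lemma dominated_mono s i v i' v' :
  dominated s i v -> i <= i' -> v <= v' -> dominated s i' v'.
Proof.
by move=> [f [e [t [occf le_ei le_tv]]]] le_i le_v; exists f, e, t; split => //; lia.
Qed.

Lemma dominated_free_occ s i v : dominated s i v ->
  exists f e t, [/\ occ s f e t, e <= i, t <= v &
    forall j, supp f j -> ~ dominated s j (s j)].
Proof.
suff: forall N i v, i + v = N -> dominated s i v ->
    exists f e t, [/\ occ s f e t, e <= i, t <= v &
      forall j, supp f j -> ~ dominated s j (s j)] by apply.
elim/ltn_ind => N IH {}i {}v Niv [f [e [t [occf le_ei le_tv]]]].
have [[j [fj dom_j]] | free] := classic (exists j, supp f j /\ dominated s j (s j)).
- have [lt_je lt_sjt] := supp_in_box occf fj.
  have [|f' [e' [t' [occ' le_e' le_t' free']]]] := IH (j + s j) _ j (s j) erefl dom_j.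
    by lia.
  by exists f', e', t'; split => //; lia.
- by exists f, e, t; split => // j fj dom_j; apply: free; exists j.
Qed.

Lemma dominated_transfer (s s' : 'S_n) i v :
  (forall j : 'I_n, ~ dominated s j (s j) -> s j = s' j) ->
  dominated s i v -> dominated s' i v.
Proof.
move=> agree /dominated_free_occ [f [e [t [occf le_ei le_tv free]]]].
exists f, e, t; split => //; apply: (occ_local occf) => j fj.
exact/agree/free.
Qed.

Definition dom_equiv (s s' : 'S_n) : Prop :=
  (forall i v, dominated s i v <-> dominated s' i v) /\
  (forall i : 'I_n, ~ dominated s i (s i) \/ ~ dominated s' i (s' i) -> s i = s' i).

Lemma dom_equiv_refl s : dom_equiv s s.
Proof. by []. Qed.

Lemma dom_equiv_sym s s' : dom_equiv s s' -> dom_equiv s' s.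
Proof.
move=> [same_dom same_free]; split => [i v | i free]; first by rewrite same_dom.
by rewrite same_free //; case: free; [right | left].
Qed.

Lemma dom_equiv_trans s1 s2 s3 :
  dom_equiv s1 s2 -> dom_equiv s2 s3 -> dom_equiv s1 s3.
Proof.
move=> [dom12 free12] [dom23 free23]; split => [i v | i [free1 | free3]].
- by rewrite dom12 dom23.
- have eq12 := free12 i (or_introl free1).
  rewrite eq12 free23 //; left; rewrite -eq12 -dom12; exact: free1.
- have eq23 := free23 i (or_intror free3).
  rewrite -eq23 free12 //; right; rewrite eq23 dom23; exact: free3.
Qed.

Lemma dom_equiv_swap s (a b : 'I_n) :
  a < b -> dominated s a (minn (s a) (s b)) -> dom_equiv s (tperm a b * s)%g.
Proof.
move=> lt_ab dom_ab; set s' := (tperm a b * s)%g.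
have dom_a v : minn (s a) (s b) <= v -> dominated s a v.
  by move=> le_v; apply: dominated_mono dom_ab _ le_v.
have dom_b v : minn (s a) (s b) <= v -> dominated s b v.
  by move=> le_v; apply: dominated_mono dom_ab (ltnW lt_ab) le_v.
have s'a : s' a = s b by rewrite permM tpermL.
have s'b : s' b = s a by rewrite permM tpermR.
have s'D i : i != a -> i != b -> s' i = s i.
  by move=> ne_a ne_b; rewrite permM tpermD // eq_sym.
have dom_s' i v : dominated s i v -> dominated s' i v.
  apply: dominated_transfer => j free_j.
  rewrite s'D //; apply/eqP => ej; apply: free_j; rewrite ej.
  - by apply: dom_a; lia.
  - by apply: dom_b; lia.
have dom_s i v : dominated s' i v -> dominated s i v.
  apply: dominated_transfer => j free_j.
  rewrite s'D //; apply/eqP => ej; apply: free_j; rewrite ej ?s'a ?s'b.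
  - by apply/dom_s'/dom_a; lia.
  - by apply/dom_s'/dom_b; lia.
split => [i v | i free]; first by split; [apply: dom_s' | apply: dom_s].
have [ia | ne_a] := eqVneq i a.
  by subst i; exfalso; case: free; apply; rewrite ?s'a; [apply: dom_a | apply/dom_s'/dom_a]; lia.
have [ib | ne_b] := eqVneq i b.
  by subst i; exfalso; case: free; apply; rewrite ?s'b; [apply: dom_b | apply/dom_s'/dom_b]; lia.
by rewrite s'D.
Qed.

Definition potential (s : 'S_n) : nat := \sum_(i < n) i * s i.

Lemma potential_tperm s (a b : 'I_n) : a != b ->
  potential (tperm a b * s)%g + (a * s a + b * s b) = potential s + (a * s b + b * s a).
Proof.
move=> ne_ab; rewrite /potential (bigD1 a) // (bigD1 b) 1?eq_sym //=.
rewrite [in RHS](bigD1 a) // [in RHS](bigD1 b) 1?eq_sym //= !permM tpermL tpermR.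
under eq_bigr => i /andP [ne_ia ne_ib] do rewrite permM tpermD 1?eq_sym //.
(* The entries [s i] carry two syntactically different coercions of ['I_n] to
   a finType, which [lia] would treat as distinct atoms. *)
rewrite /reverse_coercion; lia.
Qed.

Lemma potential_le s : potential s <= n * (n * n).
Proof.
rewrite /potential -[X in _ <= X * _]card_ord -sum_nat_const.
by apply: leq_sum => i _; apply: leq_mul; apply: ltnW.
Qed.

Definition dominated_pair (desc : bool) (s : 'S_n) : Prop :=
  exists a b : 'I_n, [/\ a < b, dominated s a (minn (s a) (s b)) &
    if desc then s b < s a else s a < s b].

(* Swapping the entries of a dominated 21 (resp. 12) stays in the class and
   strictly increases (resp. decreases) the potential, so the swaps terminate. *)
Lemma exists_dominated_pair_free desc s :
  exists t, dom_equiv s t /\ ~ dominated_pair desc t.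
Proof.
suff: forall N s, (if desc then n * (n * n) - potential s else potential s) = N ->
    exists t, dom_equiv s t /\ ~ dominated_pair desc t by apply.
elim/ltn_ind => N IH {}s sN.
have [[a [b [lt_ab dom_ab ord_ab]]] | free] := classic (dominated_pair desc s); last first.
  by exists s; split; first exact: dom_equiv_refl.
have ne_ab : a != b by rewrite neq_ltn lt_ab.
have [|t [eq_t free_t]] := IH _ _ (tperm a b * s)%g erefl.
  have := potential_tperm s ne_ab; have := potential_le (tperm a b * s)%g.
  by clear IH; case: desc ord_ab sN => ord_ab <-; rewrite /reverse_coercion in ord_ab *; nia.
by exists t; split => //; exact: dom_equiv_trans (dom_equiv_swap lt_ab dom_ab) eq_t.
Qed.

Lemma perm_preimage_after (u w : 'S_n) (c : 'I_n) :
  (forall i : 'I_n, i < c -> u i = w i) -> u c != w c -> c < (w^-1)%g (u c).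
Proof.
move=> eq_before ne_c; have w_inv : w ((w^-1)%g (u c)) = u c by rewrite permKV.
case: ltngtP => // [lt_dc | /val_inj eq_cd].
- by move: (eq_before _ lt_dc); rewrite w_inv => /perm_inj eq_dc; rewrite eq_dc ltnn in lt_dc.
- by move: ne_c; rewrite -w_inv -eq_cd eqxx.
Qed.

(* At the first position [c] where two equivalent permutations differ, the
   smaller entry is dominated, and its partner value occurs later in the
   other permutation. *)
Lemma dom_equiv_first_diff desc (s t : 'S_n) (c : 'I_n) : dom_equiv s t ->
  (forall i : 'I_n, i < c -> s i = t i) -> s c < t c ->
  dominated_pair desc s \/ dominated_pair desc t.
Proof.
move=> [same_dom same_free] eq_before lt_c.
have ne_c : s c != t c by rewrite neq_ltn lt_c.
have dom_c : dominated s c (s c).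
  by apply: NNPP => free_c; move: lt_c; rewrite same_free ?ltnn //; left.
case: desc.
- right; exists c, ((t^-1)%g (s c)); rewrite permKV (minn_idPr (ltnW lt_c)).
  split => //; last by rewrite -same_dom.
  by apply: perm_preimage_after => // i /eq_before.
- left; exists c, ((s^-1)%g (t c)); rewrite permKV (minn_idPl (ltnW lt_c)).
  split => //; apply: perm_preimage_after; last by rewrite eq_sym.
  by move=> i /eq_before.
Qed.

Lemma dominated_pair_free_uniq desc (s t : 'S_n) : dom_equiv s t ->
  ~ dominated_pair desc s -> ~ dominated_pair desc t -> s = t.
Proof.
move=> eq_st free_s free_t.
suff eq_at m (i : 'I_n) : i = m :> nat -> s i = t i by apply/permP => i; apply: eq_at.
elim/ltn_ind: m i => m IH i im.
have eq_before (j : 'I_n) : j < i -> s j = t j.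
  by move=> lt_ji; apply: (IH j _ j) => //; rewrite -im.
case: (ltngtP (s i) (t i)) => [lt_st | lt_ts | /val_inj //].
- by case: (dom_equiv_first_diff desc eq_st eq_before lt_st).
- have eq_before' (j : 'I_n) : j < i -> t j = s j by move=> /eq_before.
  by case: (dom_equiv_first_diff desc (dom_equiv_sym eq_st) eq_before' lt_ts).
Qed.

Lemma card_dominated_pair_free_le desc desc' (P P' : pred 'S_n) :
  (forall s, P s <-> dominated_pair desc s) ->
  (forall s, P' s <-> dominated_pair desc' s) ->
  #|[set s | ~~ P s]| <= #|[set s | ~~ P' s]|.
Proof.
move=> PE P'E; have /fin_all_exists [g gP] := exists_dominated_pair_free desc'.
rewrite -(card_in_imset (f := g)).
  apply/subset_leq_card/subsetP => _ /imsetP [s _ ->].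
  by rewrite inE; apply/negP => /P'E; apply: (gP s).2.
move=> s1 s2; rewrite !inE => /negP free1 /negP free2 eq_g.
apply: (dominated_pair_free_uniq (desc := desc)).
- apply: dom_equiv_trans (gP s1).1 _; rewrite eq_g; exact/dom_equiv_sym/(gP s2).1.
- by move/PE.
- by move/PE.
Qed.

Lemma card_dominated_pair_free_eq desc desc' (P P' : pred 'S_n) :
  (forall s, P s <-> dominated_pair desc s) ->
  (forall s, P' s <-> dominated_pair desc' s) ->
  #|[set s | ~~ P s]| = #|[set s | ~~ P' s]|.
Proof.
move=> PE P'E; apply/eqP.
by rewrite eqn_leq !(card_dominated_pair_free_le PE P'E, card_dominated_pair_free_le P'E PE).
Qed.

End DominatedCells.

(* An occurrence of the restriction of [p] to the labels in [[k-2]]: isolated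
   vertices constrain only positions, so the support consists of the images
   of the non-isolated ones. *)
Definition lower_occ k n (p : rel 'I_k) (s : 'S_n) (f : {ffun 'I_k -> 'I_n}) (e t : nat) :=
  [/\ forall x y : 'I_k, x < y -> y < k - 2 -> f x < f y,
      forall x : 'I_k, x < k - 2 -> f x < e,
      forall x y : 'I_k, x < k - 2 -> y < k - 2 -> ~ isolated p x -> ~ isolated p y ->
        p x y -> s (f x) < s (f y)
    & forall x : 'I_k, x < k - 2 -> ~ isolated p x -> s (f x) < t].

Definition lower_supp k n (p : rel 'I_k) (f : {ffun 'I_k -> 'I_n}) (i : 'I_n) :=
  exists x : 'I_k, [/\ x < k - 2, ~ isolated p x & f x = i].

Lemma lower_supp_in_box k n (p : rel 'I_k) (s : 'S_n) f e t : lower_occ p s f e t ->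
  forall i, lower_supp p f i -> i < e /\ s i < t.
Proof. by move=> [_ occ_e _ occ_t] _ [x [lt_x nx <-]]; split; [apply: occ_e | apply: occ_t]. Qed.

Lemma lower_occ_local k n (p : rel 'I_k) (s s' : 'S_n) f e t : lower_occ p s f e t ->
  (forall i, lower_supp p f i -> s i = s' i) -> lower_occ p s' f e t.
Proof.
move=> [occ_incr occ_e occ_rel occ_t] eq_supp; split => //.
- move=> x y lt_x lt_y nx ny pxy.
  by rewrite -!eq_supp; [exact: occ_rel | exists y | exists x].
- by move=> x lt_x nx; rewrite -eq_supp; [exact: occ_t | exists x].
Qed.

Lemma related_not_isolated k (r : rel 'I_k) x y : irreflexive r -> r x y ->
  ~ isolated r x /\ ~ isolated r y.
Proof.
move=> irr_r rxy; have ne_xy : x != y by apply: contraTneq rxy => ->; rewrite irr_r.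
split=> iso.
- by have [] := iso y; rewrite 1?eq_sym // rxy.
- by have [] := iso x; rewrite // rxy.
Qed.

Lemma pop_asym k (r : rel 'I_k) x y : is_pop r -> r x y -> r y x -> False.
Proof. by move=> [irr_r tr_r] rxy ryx; have := tr_r _ _ _ rxy ryx; rewrite irr_r. Qed.

Section TopPair.

Variables (k n : nat) (p P : rel 'I_k) (o2 o1 : 'I_k).
Hypotheses (k_ge2 : 2 <= k) (o2E : nat_of_ord o2 = k - 2) (o1E : nat_of_ord o1 = k - 1).
Hypothesis P_pop : is_pop P.
Hypothesis iso_P : forall x, isolated P x <-> isolated p x.
Hypothesis top_P : forall x y : 'I_k, x < k - 2 -> ~ isolated p x -> k - 2 <= y -> P x y.
Hypothesis sub_P : forall x y : 'I_k, x < k - 2 -> y < k - 2 ->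
  ~ isolated p x -> ~ isolated p y -> P x y = p x y.

Lemma top_cases (x : 'I_k) : k - 2 <= x -> x = o2 \/ x = o1.
Proof.
move=> le_x; have := ltn_ord x.
by case: (ltnP x (k - 1)) => ? ?; [left | right]; apply: val_inj; rewrite /= ?o2E ?o1E; lia.
Qed.

Lemma top_lt (x y : 'I_k) : k - 2 <= x -> x < y -> x = o2 /\ y = o1.
Proof.
move=> le_x lt_xy; have := ltn_ord y.
by split; apply: val_inj; rewrite /= ?o2E ?o1E; lia.
Qed.

Lemma top_not_below (x y : 'I_k) : x < k - 2 -> k - 2 <= y -> ~ P y x.
Proof.
move=> lt_x le_y Pyx; have [_ /iso_P nx] := related_not_isolated P_pop.1 Pyx.
exact: pop_asym P_pop Pyx (top_P lt_x nx le_y).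
Qed.

Lemma top_pair (x y : 'I_k) : k - 2 <= x -> k - 2 <= y -> P x y ->
  (x = o2 /\ y = o1) \/ (x = o1 /\ y = o2).
Proof.
by move=> /top_cases [] -> /top_cases [] ->; rewrite ?P_pop.1 //; tauto.
Qed.

Lemma lt_o2_o1 : o2 < o1.
Proof. by rewrite o2E o1E; lia. Qed.

Lemma dominated_pair_of_contains desc (s : 'S_n) :
  (if desc then P o1 o2 else P o2 o1) ->
  contains P s -> dominated_pair (@lower_occ k n p) desc s.
Proof.
move=> top_rel /existsP [f /forallP emb].
have emb_jm (j m : 'I_k) : (j < m -> f j < f m) /\ (P j m -> s (f j) < s (f m)).
  by have /forallP /(_ m) /andP [/implyP ? /implyP ?] := emb j.
have f_incr (j m : 'I_k) : j < m -> f j < f m by move=> /(emb_jm j m).1.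
have f_rel (j m : 'I_k) : P j m -> s (f j) < s (f m) by move=> /(emb_jm j m).2.
exists (f o2), (f o1); split; first exact/f_incr/lt_o2_o1.
- exists f, (f o2), (minn (s (f o2)) (s (f o1))); split => //; split.
  + by move=> x y lt_xy _; apply: f_incr.
  + by move=> x lt_x; apply: f_incr; rewrite o2E.
  + by move=> x y lt_x lt_y nx ny pxy; apply: f_rel; rewrite sub_P.
  + move=> x lt_x nx; rewrite leq_min.
    by apply/andP; split; apply/f_rel/top_P; rewrite ?o2E ?o1E //; lia.
- by case: desc top_rel => /f_rel.
Qed.

Lemma contains_of_dominated_pair desc (s : 'S_n) :
  (if desc then P o1 o2 else P o2 o1) ->
  dominated_pair (@lower_occ k n p) desc s -> contains P s.
Proof.
move=> top_rel [a [b [lt_ab [f [e [t [[f_incr f_e f_rel f_t] le_ea le_t]]]] ord_ab]]].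
pose g := [ffun x => if x == o2 then a else if x == o1 then b else f x].
have g_o2 : g o2 = a by rewrite ffunE eqxx.
have g_o1 : g o1 = b by rewrite ffunE ifN ?eqxx // -val_eqE /= o2E o1E; lia.
have g_lower (x : 'I_k) : x < k - 2 -> g x = f x.
  move=> lt_x; have ne_x2 : x != o2 by rewrite -val_eqE /= o2E; lia.
  have ne_x1 : x != o1 by rewrite -val_eqE /= o1E; lia.
  by rewrite ffunE (negbTE ne_x2) (negbTE ne_x1).
have g_top (y : 'I_k) : k - 2 <= y -> e <= g y /\ t <= s (g y).
  by case/top_cases => ->; rewrite ?g_o2 ?g_o1; move: le_t; rewrite leq_min; lia.
have not_iso (x y : 'I_k) : P x y -> ~ isolated p x /\ ~ isolated p y.
  by move=> /(related_not_isolated P_pop.1) [/iso_P nx /iso_P ny].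
apply/existsP; exists g; apply/forallP => j; apply/forallP => m.
apply/andP; split; apply/implyP.
- move=> lt_jm; case: (ltnP m (k - 2)) => [m_low | m_top].
    by rewrite !g_lower //; [apply: f_incr | lia].
  case: (ltnP j (k - 2)) => [j_low | j_top].
    by rewrite g_lower //; apply: leq_trans (f_e j j_low) (g_top m m_top).1.
  by have [-> ->] := top_lt j_top lt_jm; rewrite g_o2 g_o1.
- move=> Pjm; have [nj nm] := not_iso j m Pjm.
  case: (ltnP m (k - 2)) => [m_low | m_top].
    have j_low : j < k - 2.
      by rewrite ltnNge; apply/negP => j_top; apply: (top_not_below m_low j_top).
    by rewrite !g_lower //; apply: f_rel; rewrite -?sub_P.
  case: (ltnP j (k - 2)) => [j_low | j_top].
    by rewrite g_lower //; apply: leq_trans (f_t j j_low nj) (g_top m m_top).2.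
  have [[jE mE] | [jE mE]] := top_pair j_top m_top Pjm; subst j m; rewrite g_o2 g_o1;
    by case: desc top_rel ord_ab => // rel; case: (pop_asym P_pop rel Pjm).
Qed.

Lemma contains_top_pairE desc (s : 'S_n) :
  (if desc then P o1 o2 else P o2 o1) ->
  contains P s <-> dominated_pair (@lower_occ k n p) desc s.
Proof.
by move=> top_rel; split; [apply: dominated_pair_of_contains | apply: contains_of_dominated_pair].
Qed.

End TopPair.

Theorem lemma2p2 (k : nat) (hk : (3 <= k)%N) (p p' : rel 'I_k)
  (Hp : is_pop p) (Hp' : is_pop p')
  (Hiso : forall x : 'I_k, isolated p x <-> isolated p' x)
  (Hnot : forall x : 'I_k, (k - 3 <= x)%N -> ~ isolated p x)
  (Htop : forall x y : 'I_k, (x < k - 2)%N -> ~ isolated p x ->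
            (k - 2 <= y)%N -> p x y /\ p' x y)
  (Hsub : forall x y : 'I_k, (x < k - 2)%N -> (y < k - 2)%N ->
            ~ isolated p x -> ~ isolated p y -> p x y = p' x y)
  (Hlast : forall a b : 'I_k, nat_of_ord a = k.-1 -> nat_of_ord b = k.-2 ->
            p a b /\ p' b a) :
  wilf_equiv p p'.
Proof.
move=> n _.
have k_ge2 : 2 <= k by lia.
have lt_k2 : k - 2 < k by lia.
have lt_k1 : k - 1 < k by lia.
set o2 := Ordinal lt_k2; set o1 := Ordinal lt_k1.
have [top_p top_p'] : p o1 o2 /\ p' o2 o1 by apply: Hlast => /=; lia.
have char_p s := @contains_top_pairE k n p p o2 o1 k_ge2 erefl erefl Hp
  (fun x => iff_refl _) (fun x y lt_x nx le_y => (Htop x y lt_x nx le_y).1)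
  (fun x y _ _ _ _ => erefl) true s top_p.
have char_p' s := @contains_top_pairE k n p p' o2 o1 k_ge2 erefl erefl Hp'
  (fun x => iff_sym (Hiso x)) (fun x y lt_x nx le_y => (Htop x y lt_x nx le_y).2)
  (fun x y lt_x lt_y nx ny => esym (Hsub x y lt_x lt_y nx ny)) false s top_p'.
exact: (card_dominated_pair_free_eq (@lower_supp_in_box k n p) (@lower_occ_local k n p)
  char_p char_p').
Qed.
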